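(* Fix $\beta\in[0,2]$ and let $M_0,M_1,M_2,\dots\in\mathfrak M^\beta$, with $\beta$-inversions $M_n^\beta$. 1. $M_n\to M_0$ on $\mathbb R^d_0$ if and only if $M_n^\beta\to M_0^\beta$ on $\mathbb R^d_0$. 2. $\lim_{\epsilon\downarrow0}\limsup_{n\to\infty}\int_{|x|<\epsilon}|x|^2M_n(dx)=0$ if and only if $\lim_{N\to\infty}\limsup_{n\to\infty}\int_{|x|>N}|x|^\beta M_n^\beta(dx)=0$.
   Context: For $\beta\in[0,2]$, $\mathfrak M^\beta$ is the class of Borel measures $M$ on $\mathbb R^d$ with $M(\{0\})=0$ and $\int_{\mathbb R^d}(|x|^2\wedge|x|^\beta)M(dx)<\infty$. For $M\in\mathfrak M^\beta$, the $\beta$-inversion $M^\beta$ is the measure with $M^\beta(\{0\})=0$ and $M^\beta(A)=\int_{\mathbb R^d}1_A(x/|x|^2)|x|^{2+\beta}M(dx)$ for Borel $A$. $\mathbb R^d_0=\mathbb R^d\setminus\{0\}$, and $M_n\to M_0$ on $\mathbb R^d_0$ means $\int f\,dM_n\to\int f\,dM_0$ for every bounded continuous $f:\mathbb R^d\to\mathbb R$ vanishing on a neighborhood of $0$ and on a neighborhood of infinity. *)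

From HB Require Import structures.
From mathcomp Require Import all_boot all_order all_algebra.
From mathcomp Require Import all_classical all_reals all_analysis.
Set Implicit Arguments. Unset Strict Implicit. Unset Printing Implicit Defensive.
Import Order.TTheory GRing.Theory Num.Theory.
Import numFieldNormedType.Exports.
Local Open Scope classical_set_scope.
Local Open Scope ring_scope.

(* R^d, realised as row vectors 'rV[R]_d with their (product = Euclidean)
   topology and vector space structure, equipped with the Borel sigma-algebra
   (the sigma-algebra generated by the open sets). *)
Definition Rd (R : realType) (d : nat) : Type := 'rV[R]_d.

Section Rd_instances.
Variables (R : realType) (d : nat).
HB.instance Definition _ := NormedModule.on (Rd R d).
HB.instance Definition _ := @isMeasurable.Build default_measure_display
  (Rd R d) <<s (@open ('rV[R]_d)) >>
  (@sigma_algebra0 _ setT _) (@sigma_algebraC _ _)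
  (@sigma_algebra_bigcup _ setT _).
End Rd_instances.

Section defs.
Variables (R : realType) (d : nat).

Definition enorm (x : Rd R d) : R := Num.sqrt (\sum_(i < d) x ord0 i ^+ 2).

Definition inv_pt (x : Rd R d) : Rd R d := (enorm x ^+ 2)^-1 *: x.

Definition frakM (beta : R) (M : {measure set (Rd R d) -> \bar R}) : Prop :=
  M [set (0%R : Rd R d)] = 0%E /\
  (\int[M]_x (Num.min (enorm x ^+ 2) (enorm x `^ beta))%:E < +oo)%E.

Definition is_beta_inversion (beta : R)
    (M Mb : {measure set (Rd R d) -> \bar R}) : Prop :=
  Mb [set (0%R : Rd R d)] = 0%E /\
  forall A : set (Rd R d), measurable A ->
    Mb A = (\int[M]_(x in [set~ (0%R : Rd R d)]) ((\1_A (inv_pt x))%:E *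
                                     (enorm x `^ (2 + beta))%:E))%E.

Definition conv_Rd0 (M : nat -> {measure set (Rd R d) -> \bar R})
    (M0 : {measure set (Rd R d) -> \bar R}) : Prop :=
  forall f : Rd R d -> R,
    continuous f ->
    (exists C : R, forall x, `|f x| <= C) ->
    (exists r : R, 0 < r /\ forall x, enorm x < r -> f x = 0) ->
    (exists N : R, forall x, N < enorm x -> f x = 0) ->
    (fun n => (\int[M n]_x (f x)%:E)%E) @ \oo --> (\int[M0]_x (f x)%:E)%E.
End defs.

(* The inversion x |-> x / |x|^2 is an involution of R^d_0 exchanging the
   neighbourhoods of the origin with those of infinity, and M^beta is the image
   of |x|^(2+beta) M(dx) under it.  Hence, first for simple functions and then
   by monotone convergence, int f dM^beta = int f(x/|x|^2) |x|^(2+beta) M(dx).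
   The transform f |-> f(x/|x|^2) |x|^(2+beta) is an involution of the test
   functions of vague convergence on R^d_0, which gives part 1; on {|x| > N}
   it turns |x|^beta dM^beta into |x|^2 dM on {|x| < 1/N}, so the two iterated
   limits of part 2 coincide under eps = 1/N. *)

From HB Require Import structures.
From mathcomp Require Import all_boot all_order all_algebra.
From mathcomp Require Import all_classical all_reals all_analysis.
From mathcomp Require Import measurable_realfun.
Set Implicit Arguments.
Unset Strict Implicit.
Unset Printing Implicit Defensive.
Import Order.TTheory GRing.Theory Num.Theory.
Import numFieldNormedType.Exports.
Local Open Scope classical_set_scope.
Local Open Scope ring_scope.

Section enorm.
Variables (R : realType) (d : nat).
Implicit Types x : Rd R d.

Lemma enorm_ge0 x : 0 <= enorm x.
Proof. exact: sqrtr_ge0. Qed.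

Lemma enorm0 : enorm (0 : Rd R d) = 0.
Proof. by rewrite /enorm big1 ?sqrtr0// => i _; rewrite mxE expr0n. Qed.

Lemma enorm_eq0 x : (enorm x == 0) = (x == 0).
Proof.
apply/idP/eqP => [|->]; last by rewrite enorm0.
rewrite /enorm sqrtr_eq0 le_eqVlt ltNge sumr_ge0 ?orbF => [/eqP x0|i _];
  last exact: sqr_ge0.
apply/matrixP => i j; rewrite (ord1 i) !mxE; apply/eqP; rewrite -sqrf_eq0.
by rewrite (psumr_eq0P _ x0)// => k _; exact: sqr_ge0.
Qed.

Lemma enorm_gt0 x : (0 < enorm x) = (x != 0).
Proof. by rewrite lt_def enorm_ge0 enorm_eq0 andbT. Qed.

Lemma enormZ (c : R) x : enorm (c *: x) = `|c| * enorm x.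
Proof.
rewrite /enorm; under eq_bigr do rewrite mxE exprMn.
by rewrite -mulr_sumr sqrtrM ?sqr_ge0// sqrtr_sqr.
Qed.

Lemma enorm_inv_pt x : enorm (inv_pt x) = (enorm x)^-1.
Proof.
rewrite /inv_pt enormZ ger0_norm ?invr_ge0 ?exprn_ge0 ?enorm_ge0//.
have [->|x0] := eqVneq (enorm x) 0; first by rewrite mulr0 invr0.
by rewrite expr2 invfM -mulrA mulVf ?mulr1.
Qed.

Lemma inv_pt0 : inv_pt (0 : Rd R d) = 0.
Proof. by rewrite /inv_pt scaler0. Qed.

Lemma inv_ptK : involutive (@inv_pt R d).
Proof.
move=> x; have [->|x0] := eqVneq x 0; first by rewrite !inv_pt0.
have e0 : enorm x != 0 by rewrite enorm_eq0.
rewrite {1}/inv_pt enorm_inv_pt /inv_pt scalerA exprVn invrK mulfV ?scale1r//.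
exact: expf_neq0.
Qed.

Lemma continuous_enorm : continuous (@enorm R d).
Proof.
have -> : @enorm R d =
    Num.sqrt \o \sum_(i < d) (fun x : Rd R d => x ord0 i ^+ 2).
  by apply/funext => x; rewrite /= fct_sumE.
move=> x; apply: continuous_comp; last exact: sqrt_continuous.
apply: (@big_ind _ (fun f : Rd R d -> R => {for x, continuous f})).
- exact: cst_continuous.
- by move=> f g; exact: continuousD.
- move=> i _; apply: continuous_comp (@exprn_continuous R 2 _).
  exact: coord_continuous.
Qed.

Lemma open_enorm_lt (a : R) : open [set x : Rd R d | enorm x < a].
Proof. exact: (continuousP _).1 (@continuous_enorm) _ (@open_lt R a). Qed.

Lemma open_enorm_gt (a : R) : open [set x : Rd R d | a < enorm x].
Proof. exact: (continuousP _).1 (@continuous_enorm) _ (@open_gt R a). Qed.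

Lemma continuous_inv_pt x : x != 0 -> {for x, continuous (@inv_pt R d)}.
Proof.
move=> x0; apply: continuousZ; last exact: cvg_id.
apply: continuousV; first by rewrite expf_neq0 ?enorm_eq0.
exact: continuous_comp (@continuous_enorm x) (@exprn_continuous R 2 _).
Qed.

End enorm.

Section measurability.
Variables (R : realType) (d : nat).

Lemma Rd_open_measurable (A : set (Rd R d)) : open A -> measurable A.
Proof. exact: sub_sigma_algebra. Qed.

Lemma Rd_continuous_measurable_fun (f : Rd R d -> R) :
  continuous f -> measurable_fun setT f.
Proof.
move=> /continuousP cf; apply: (measurability _ (RGenOpens.measurableE R)).
move=> _ [_ [a [b ->] <-]]; rewrite setTI.
by apply: Rd_open_measurable; apply/cf/interval_open.
Qed.

Lemma measurable_enorm : measurable_fun setT (@enorm R d).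
Proof. exact: Rd_continuous_measurable_fun (@continuous_enorm R d). Qed.

Lemma measurable_inv_pt : measurable_fun setT (@inv_pt R d).
Proof.
apply: (measurability _ (erefl (@measurable _ (Rd R d)))).
move=> _ [U oU <-]; rewrite setTI.
have nz_open : open [set x : Rd R d | 0 < enorm x] := @open_enorm_gt R d 0.
rewrite -[_ @^-1` U]setIT -(setUv [set x : Rd R d | 0 < enorm x]) setIUr.
apply: measurableU.
  apply: Rd_open_measurable; rewrite openE => x [Ux x0].
  have x0' : x != 0 by rewrite -enorm_gt0.
  apply: filterI; last exact: open_nbhs_nbhs.
  exact: continuous_inv_pt x0' _ (open_nbhs_nbhs _).
have zeroE : ~` [set x : Rd R d | 0 < enorm x] = [set 0].
  apply/seteqP; split => x /=; last by move=> ->; rewrite enorm0 ltxx.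
  by move=> /negP; rewrite enorm_gt0 negbK => /eqP.
have m0 : measurable [set (0 : Rd R d)].
  by rewrite -zeroE; apply: measurableC; exact: Rd_open_measurable.
rewrite zeroE; have [U0|U0] := pselect (U (inv_pt (0 : Rd R d))).
  by rewrite setIidr// => _ ->.
rewrite (_ : _ `&` _ = set0)//.
by apply/seteqP; split => // x [Ux x0]; move: x0 Ux => /= ->.
Qed.

End measurability.

Import HBNNSimple.

Section weighted_image.
Local Open Scope ereal_scope.
Context d (T : measurableType d) (R : realType).
Variables (mu nu : {measure set T -> \bar R}) (phi : T -> T) (w : T -> R).
Hypothesis mphi : measurable_fun setT phi.
Hypothesis mw : measurable_fun setT w.
Hypothesis w_ge0 : forall x, (0 <= w x)%R.
Hypothesis nuE : forall A, measurable A ->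
  nu A = \int[mu]_x ((\1_A (phi x))%:E * (w x)%:E).

Lemma integral_weighted_image_nnsfun (s : {nnsfun T >-> R}) :
  \int[nu]_x (s x)%:E = \int[mu]_x ((s (phi x))%:E * (w x)%:E).
Proof.
have sE (t : T) :
    (s t)%:E = \sum_(y \in range s) (y * \1_(s @^-1` [set y]) t)%:E.
  by rewrite fsumEFin // -fimfunE.
have sphiE t : (s (phi t))%:E * (w t)%:E =
    \sum_(y \in range s) (y * \1_(s @^-1` [set y]) (phi t))%:E * (w t)%:E.
  by rewrite sE ge0_mule_fsuml// => y; exact: nnfun_muleindic_ge0.
under eq_integral do rewrite sE.
under [RHS]eq_integral do rewrite sphiE.
have mindic (y : R) :
    measurable_fun setT (fun t : T => y * \1_(s @^-1` [set y]) t)%R.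
  exact: measurable_funM.
rewrite ge0_integral_fsum//; last 2 first.
- by move=> y; apply/measurable_EFinP.
- by move=> y t _; rewrite EFinM; exact: nnfun_muleindic_ge0.
rewrite ge0_integral_fsum//; last 2 first.
- move=> y; apply: emeasurable_funM; last exact/measurable_EFinP.
  by apply/measurable_EFinP; exact: measurableT_comp (mindic y) mphi.
- move=> y t _; apply: mule_ge0; last by rewrite lee_fin.
  by rewrite EFinM; exact: nnfun_muleindic_ge0.
apply: eq_fsbigr => r /[!inE] -[t _ <-].
rewrite integralZl_indic_nnsfun// integral_indic// setIT nuE; last first.
  exact: measurable_funPTI.
under [RHS]eq_integral do rewrite EFinM -muleA.
rewrite ge0_integralZl// ?lee_fin//.
- apply: emeasurable_funM; last exact/measurable_EFinP.
  apply/measurable_EFinP; apply: measurableT_comp mphi.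
  exact/measurable_indic/measurable_funPTI.
- by move=> x _; rewrite mule_ge0 ?lee_fin.
Qed.

Lemma ge0_integral_weighted_image (h : T -> \bar R) :
  (forall x, 0 <= h x) -> measurable_fun setT h ->
  \int[nu]_x h x = \int[mu]_x (h (phi x) * (w x)%:E).
Proof.
move=> h0 mh; pose s := nnsfun_approx measurableT mh.
have s_cvg x : (s n x)%:E @[n --> \oo] --> h x.
  exact: cvg_nnsfun_approx (fun x _ => h0 x) x I.
have s_nd x : {homo (fun n => (s n x)%:E) : m n / (m <= n)%N >-> m <= n}.
  by move=> m n mn; rewrite lee_fin; exact/lefP/nd_nnsfun_approx.
have L1 : \int[nu]_x (s n x)%:E @[n --> \oo] --> \int[nu]_x h x.
  rewrite [X in _ --> X](eq_integral (fun x => limn (fun n => (s n x)%:E))).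
    apply: cvg_monotone_convergence => //.
    - by move=> n; exact/measurable_EFinP.
    - by move=> n x _; rewrite lee_fin.
  by move=> x _; apply/esym/cvg_lim => //; exact: s_cvg.
have L2 : \int[mu]_x ((s n (phi x))%:E * (w x)%:E) @[n --> \oo] -->
    \int[mu]_x (h (phi x) * (w x)%:E).
  rewrite [X in _ --> X](eq_integral
      (fun x => limn (fun n => (s n (phi x))%:E * (w x)%:E))).
    apply: cvg_monotone_convergence => //.
    - move=> n; apply: emeasurable_funM; last exact/measurable_EFinP.
      by apply/measurable_EFinP; exact: measurableT_comp.
    - by move=> n x _; rewrite mule_ge0 ?lee_fin.
    - by move=> x _ m n mn; rewrite lee_wpmul2r ?lee_fin//; exact: s_nd.
  by move=> x _; apply/esym/cvg_lim => //; exact/cvgeZr/s_cvg.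
rewrite -(cvg_lim _ L1) // -(cvg_lim _ L2) //.
by congr (limn _); apply/funext => n; exact: integral_weighted_image_nnsfun.
Qed.

Lemma integral_weighted_image (f : T -> R) : measurable_fun setT f ->
  \int[nu]_x (f x)%:E = \int[mu]_x (f (phi x) * w x)%:E.
Proof.
move=> mf; rewrite integralE [RHS]integralE.
have mfE : measurable_fun setT (EFin \o f) by exact/measurable_EFinP.
rewrite !ge0_integral_weighted_image //; last 2 first.
- exact: measurable_funeneg.
- exact: measurable_funepos.
congr (_ - _); apply: eq_integral => x _.
- rewrite !funeposE /= -!EFin_max -EFinM; congr EFin.
  by rewrite mulrC maxr_pMr ?w_ge0 // mulr0 mulrC.
- rewrite !funenegE /= -!EFin_max -EFinM; congr EFin.
  by rewrite mulrC maxr_pMr ?w_ge0 // mulr0 mulrN mulrC.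
Qed.

End weighted_image.

Section vague_test.
Variables (R : realType) (d : nat).
Implicit Types (f : Rd R d -> R) (x : Rd R d).

Definition vague_test f : Prop :=
  [/\ continuous f, exists C : R, forall x, `|f x| <= C,
      exists r : R, 0 < r /\ forall x, enorm x < r -> f x = 0 &
      exists N : R, forall x, N < enorm x -> f x = 0].

Lemma vague_test0 f : vague_test f -> f 0 = 0.
Proof. by case=> _ _ [r [r0 fr]] _; apply: fr; rewrite enorm0. Qed.

Lemma conv_Rd0P (M : nat -> {measure set (Rd R d) -> \bar R}) M0 :
  conv_Rd0 M M0 <-> forall f, vague_test f ->
    (\int[M n]_x (f x)%:E)%E @[n --> \oo] --> (\int[M0]_x (f x)%:E)%E.
Proof. by split=> [Mf f [] | Mf f *]; [exact: Mf | exact: Mf]. Qed.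

End vague_test.

Section inversion_transform.
Variables (R : realType) (d : nat) (p : R).
Hypothesis p_gt0 : 0 < p.
Implicit Types (f : Rd R d -> R) (x : Rd R d).

Definition inversion_transform f x : R := f (inv_pt x) * enorm x `^ p.

Lemma inversion_transform0 f : inversion_transform f 0 = 0.
Proof. by rewrite /inversion_transform enorm0 powR0 ?mulr0// gt_eqF. Qed.

Lemma inversion_transformK f : f 0 = 0 ->
  inversion_transform (inversion_transform f) =1 f.
Proof.
move=> f0 x; have [->|x0] := eqVneq x 0; first by rewrite inversion_transform0.
rewrite /inversion_transform inv_ptK enorm_inv_pt -mulrA.
by rewrite -powRM ?invr_ge0 ?enorm_ge0// mulVf ?enorm_eq0// powR1 mulr1.
Qed.

Lemma inversion_transform_eq0_near0 f (N : R) : 0 < N -> f 0 = 0 ->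
  (forall x, N < enorm x -> f x = 0) ->
  forall x, enorm x < N^-1 -> inversion_transform f x = 0.
Proof.
move=> N0 f0 fN x xN; rewrite /inversion_transform.
have [->|x0] := eqVneq x 0; first by rewrite inv_pt0 f0 mul0r.
rewrite fN ?mul0r// enorm_inv_pt.
by rewrite -(invrK N) ltf_pV2 ?posrE ?invr_gt0 ?enorm_gt0.
Qed.

Lemma inversion_transform_eq0_nearoo f (r : R) : 0 < r ->
  (forall x, enorm x < r -> f x = 0) ->
  forall x, r^-1 < enorm x -> inversion_transform f x = 0.
Proof.
move=> r0 fr x xr.
have x0 : 0 < enorm x by apply: lt_trans xr; rewrite invr_gt0.
rewrite /inversion_transform fr ?mul0r// enorm_inv_pt.
by rewrite -(invrK r) ltf_pV2 ?posrE ?invr_gt0.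
Qed.

Lemma continuous_enorm_powR x :
  x != 0 -> {for x, continuous (fun y => enorm y `^ p)}.
Proof.
move=> x0; have cp : {for enorm x, continuous (fun t : R => t `^ p)}.
  apply/differentiable_continuous/derivable1_diffP/derivable_powR.
  by rewrite in_itv/= andbT enorm_gt0.
exact: continuous_comp (@continuous_enorm R d x) cp.
Qed.

Lemma continuous_inversion_transform f : continuous f ->
  (exists N, forall x, N < enorm x -> f x = 0) -> f 0 = 0 ->
  continuous (inversion_transform f).
Proof.
move=> cf [N fN] f0 x; have [->|x0] := eqVneq x 0; last first.
  apply: (@continuousM _ _ (f \o @inv_pt R d)).
    exact: continuous_comp (continuous_inv_pt x0) (cf _).
  exact: continuous_enorm_powR.
have N1_gt0 : 0 < Num.max N 1 by rewrite lt_max ltr01 orbT.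
have fN1 y : Num.max N 1 < enorm y -> f y = 0.
  by move=> y1; apply: fN; apply: le_lt_trans y1; rewrite le_max lexx.
have near0 : \forall y \near (0 : Rd R d), enorm y < (Num.max N 1)^-1.
  apply: open_nbhs_nbhs; split; first exact: open_enorm_lt.
  by rewrite /= enorm0 invr_gt0.
have E : \forall y \near 0,
    cst (inversion_transform f 0) y = inversion_transform f y.
  apply: filterS near0 => y y1.
  by rewrite /cst inversion_transform0 (inversion_transform_eq0_near0 N1_gt0).
exact: cvg_trans (near_eq_cvg E) (cvg_cst _).
Qed.

Lemma bounded_inversion_transform f C (r : R) : 0 < r ->
  (forall x, `|f x| <= C) -> (forall x, enorm x < r -> f x = 0) ->
  forall x, `|inversion_transform f x| <= C * r^-1 `^ p.
Proof.
move=> r0 fC fr x; have C0 : 0 <= C by apply: le_trans (fC 0).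
have [xr|xr] := ltP r^-1 (enorm x).
  by rewrite (inversion_transform_eq0_nearoo r0) ?normr0 ?mulr_ge0 ?powR_ge0.
rewrite normrM (ger0_norm (powR_ge0 _ _)).
apply: ler_pM => //; first exact: powR_ge0.
by apply: ge0_ler_powR; rewrite ?nnegrE ?enorm_ge0 ?invr_ge0 => //; exact: ltW.
Qed.

Lemma vague_test_inversion_transform f :
  vague_test f -> vague_test (inversion_transform f).
Proof.
move=> tf; have f0 := vague_test0 tf; case: tf => cf [C fC] [r [r0 fr]] [N fN].
have N1_gt0 : 0 < Num.max N 1 by rewrite lt_max ltr01 orbT.
split.
- by apply: continuous_inversion_transform => //; exists N.
- by exists (C * r^-1 `^ p); exact: bounded_inversion_transform.
- exists (Num.max N 1)^-1; split; first by rewrite invr_gt0.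
  apply: inversion_transform_eq0_near0 => // y y1; apply: fN.
  by apply: le_lt_trans y1; rewrite le_max lexx.
- by exists r^-1; exact: inversion_transform_eq0_nearoo.
Qed.

End inversion_transform.

Lemma cvg_at_right0_pinftyV (R : realType) (T : topologicalType)
    (F G : R -> T) (l : T) :
  (forall N, 0 < N -> G N = F N^-1) ->
  F x @[x --> 0^'+] --> l <-> G x @[x --> +oo] --> l.
Proof.
move=> GF; split => [Fl U /Fl/nbhs_ballP[e/= e0 FU]|Gl U /Gl[M [_ GU]]].
  exists e^-1; split; first exact: num_real.
  move=> N eN; have N0 : 0 < N by apply: lt_trans eN; rewrite invr_gt0.
  rewrite /= GF//; apply: FU; last by rewrite invr_gt0.
  rewrite /ball/= sub0r normrN gtr0_norm ?invr_gt0//.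
  by rewrite -(invrK e) ltf_pV2 ?posrE ?invr_gt0.
have M1_gt0 : 0 < Num.max M 1 by rewrite lt_max ltr01 orbT.
apply/nbhs_ballP; exists (Num.max M 1)^-1; first by rewrite /= invr_gt0.
move=> y /=; rewrite /ball/= sub0r normrN => y1 y0; rewrite gtr0_norm// in y1.
rewrite -[y]invrK -GF ?invr_gt0//; apply: GU.
apply: le_lt_trans (_ : M <= Num.max M 1) _; first by rewrite le_max lexx.
by rewrite -(invrK (Num.max M 1)) ltf_pV2 ?posrE ?invr_gt0.
Qed.

Section beta_inversion.
Variables (R : realType) (d : nat) (beta : R).
Hypothesis beta_gtN2 : 0 < 2 + beta.
Variables (M Mb : {measure set (Rd R d) -> \bar R}).
Hypothesis MbE : is_beta_inversion beta M Mb.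

Let weight (x : Rd R d) : R := enorm x `^ (2 + beta).

Let weight0 : weight 0 = 0%R.
Proof. by rewrite /weight enorm0 powR0// gt_eqF. Qed.

Let measurable_weight : measurable_fun setT weight.
Proof. exact: measurableT_comp (measurable_powR _) (@measurable_enorm R d). Qed.

Local Open Scope ereal_scope.

Lemma beta_inversionE A : measurable A ->
  Mb A = \int[M]_x ((\1_A (inv_pt x))%:E * (weight x)%:E).
Proof.
move=> mA; rewrite (proj2 MbE A mA) integral_mkcond.
apply: eq_integral => x _; rewrite /patch.
have [->|x0] := eqVneq x 0%R; first by rewrite weight0 mule0 memNset//=; apply.
by rewrite mem_set//=; exact/eqP.
Qed.

Lemma ge0_integral_beta_inversion (h : Rd R d -> \bar R) :
  (forall x, 0 <= h x) -> measurable_fun setT h ->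
  \int[Mb]_x h x = \int[M]_x (h (inv_pt x) * (weight x)%:E).
Proof.
exact: (ge0_integral_weighted_image (@measurable_inv_pt R d) measurable_weight
  (fun x => powR_ge0 _ _) beta_inversionE).
Qed.

Lemma integral_beta_inversion (f : Rd R d -> R) : measurable_fun setT f ->
  \int[Mb]_x (f x)%:E = \int[M]_x (inversion_transform (2 + beta) f x)%:E.
Proof.
exact: (integral_weighted_image (@measurable_inv_pt R d) measurable_weight
  (fun x => powR_ge0 _ _) beta_inversionE).
Qed.

Lemma integral_beta_inversion_gt (N : R) : (0 < N)%R ->
  \int[Mb]_(x in [set x | (N < enorm x)%R]) (enorm x `^ beta)%:E =
  \int[M]_(x in [set x | (enorm x < N^-1)%R]) (enorm x ^+ 2)%:E.
Proof.
move=> N0; rewrite integral_mkcond ge0_integral_beta_inversion; last 2 first.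
- by move=> x; rewrite /patch; case: ifPn; rewrite ?lee_fin ?powR_ge0.
- apply/(measurable_restrictT _ _).1.
    by apply: Rd_open_measurable; exact: open_enorm_gt.
  apply/measurable_funTS/measurable_EFinP.
  exact: measurableT_comp (measurable_powR _) (@measurable_enorm R d).
rewrite [RHS]integral_mkcond; apply: eq_integral => x _; rewrite /patch.
have [->|x0] := eqVneq x 0%R.
  by rewrite inv_pt0 weight0 mule0 mem_set/= ?enorm0 ?expr0n ?invr_gt0.
have ex_gt0 : (0 < enorm x)%R by rewrite enorm_gt0.
have gtE : (N < enorm (inv_pt x))%R = (enorm x < N^-1)%R.
  by rewrite enorm_inv_pt -[in LHS](invrK N) ltf_pV2 ?posrE ?invr_gt0.
have [xN|xN] := boolP (enorm x < N^-1)%R; last first.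
  by rewrite !memNset ?mul0e//= ?gtE; exact/negP.
rewrite !mem_set/= ?gtE//.
rewrite -EFinM /weight powRD ?gt_eqF ?implybT// mulrCA enorm_inv_pt.
rewrite -powRM ?invr_ge0 ?enorm_ge0// mulVf ?gt_eqF// powR1 mulr1.
by rewrite powR_mulrn ?enorm_ge0.
Qed.

End beta_inversion.

Lemma conv_Rd0_beta_inversion (R : realType) (d : nat) (beta : R)
    (M Mb : nat -> {measure set (Rd R d) -> \bar R}) M0 Mb0 :
  0 < 2 + beta -> is_beta_inversion beta M0 Mb0 ->
  (forall n, is_beta_inversion beta (M n) (Mb n)) ->
  conv_Rd0 M M0 <-> conv_Rd0 Mb Mb0.
Proof.
move=> p_gt0 Mb0E MbE; rewrite !conv_Rd0P.
have intE (M' Mb' : {measure set (Rd R d) -> \bar R}) (f : Rd R d -> R) :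
    is_beta_inversion beta M' Mb' -> continuous f ->
    (\int[Mb']_x (f x)%:E =
     \int[M']_x (inversion_transform (2 + beta) f x)%:E)%E.
  move=> Mb'E cf; apply: (integral_beta_inversion p_gt0 Mb'E).
  exact: Rd_continuous_measurable_fun.
split=> Mf f tf.
- have [cf _ _ _] := tf.
  rewrite (intE _ _ _ Mb0E cf) (funext (fun n => intE _ _ _ (MbE n) cf)).
  exact/Mf/vague_test_inversion_transform.
- have tTf := vague_test_inversion_transform p_gt0 tf; have [cTf _ _ _] := tTf.
  have TTf := inversion_transformK p_gt0 (vague_test0 tf).
  have TTfE (M' : {measure set (Rd R d) -> \bar R}) :
    (\int[M']_x (f x)%:E = \int[M']_x (inversion_transform (2 + beta)
       (inversion_transform (2 + beta) f) x)%:E)%E.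
    by apply: eq_integral => x _; rewrite TTf.
  rewrite TTfE (funext (fun n => TTfE (M n))) -(intE _ _ _ Mb0E cTf).
  by rewrite -(funext (fun n => intE _ _ _ (MbE n) cTf)); exact: Mf.
Qed.

Theorem proposition1 (R : realType) (d : nat) (beta : R)
    (M Mb : nat -> {measure set (Rd R d) -> \bar R}) :
  0 <= beta <= 2 ->
  (forall n, frakM beta (M n)) ->
  (forall n, is_beta_inversion beta (M n) (Mb n)) ->
  (conv_Rd0 M (M 0%N) <-> conv_Rd0 Mb (Mb 0%N)) /\
  ((fun eps : R => limn_esup (fun n =>
       (\int[M n]_(x in [set x | (enorm x < eps)%R]) (enorm x ^+ 2)%:E)%E))
     @ 0^'+ --> 0%E
   <->
   (fun N : R => limn_esup (fun n =>
       (\int[Mb n]_(x in [set x | (N < enorm x)%R]) (enorm x `^ beta)%:E)%E))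
     @ +oo --> 0%E).
Proof.
move=> /andP[beta_ge0 _] _ MbE.
have p_gt0 : 0 < 2 + beta by rewrite ltr_pwDl.
split; first exact: conv_Rd0_beta_inversion p_gt0 (MbE 0%N) MbE.
apply: cvg_at_right0_pinftyV => N N0; congr limn_esup; apply/funext => n.
exact: integral_beta_inversion_gt.
Qed.
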